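(* For every $f:\mathbb{Z}\to\mathbb{R}$ such that $\widetilde{M}f$ is not identically $+\infty$, $$\|(\widetilde{M}f)'\|_{\infty}\leq \frac{1}{2}\|f'\|_{\infty}.$$ Moreover, equality is attained when $f$ is a delta function (e.g. $f=\mathbf{1}_{\{0\}}$).
   Context: For $f:\mathbb{Z}\to\mathbb{R}$, the uncentered discrete Hardy–Littlewood maximal function is $\widetilde{M}f(n)=\sup_{r,s\in\mathbb{Z}_{\ge 0}}\frac{1}{r+s+1}\sum_{k=-s}^{r}|f(n+k)|$ (possibly $+\infty$). For $g:\mathbb{Z}\to\mathbb{R}$, $g'(n)=g(n+1)-g(n)$ and $\|g\|_\infty=\sup_{n\in\mathbb{Z}}|g(n)|$. *)

From mathcomp Require Import all_boot all_order all_algebra.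
From mathcomp Require Import all_classical all_reals ereal.
Set Implicit Arguments. Unset Strict Implicit. Unset Printing Implicit Defensive.
Import Order.TTheory GRing.Theory Num.Theory.
Local Open Scope ring_scope.

Definition avg {R : realType} (f : int -> R) (n : int) (r s : nat) : R :=
  (\sum_(i < r + s + 1) `|f (n - s%:Z + i%:Z)|) / (r + s + 1)%:R.

Definition Mt {R : realType} (f : int -> R) (n : int) : \bar R :=
  ereal_sup [set (avg f n p.1 p.2)%:E | p in [set: nat * nat]].

Definition dder {R : realType} (g : int -> R) (n : int) : R := g (n + 1) - g n.

Definition supnorm {R : realType} (g : int -> R) : \bar R :=
  ereal_sup [set `|g n|%:E | n in [set: int]].

(* real-valued version of Mt (meaningful when Mt f is finite everywhere) *)
Definition Mtr {R : realType} (f : int -> R) (n : int) : R := fine (Mt f n).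

Definition delta {R : realType} (a : int) (c : R) (n : int) : R :=
  if n == a then c else 0.

From mathcomp Require Import all_boot all_order all_algebra.
From mathcomp Require Import all_classical all_reals ereal.
From mathcomp Require Import zify ring lra.
Import Order.TTheory GRing.Theory Num.Theory.
Local Open Scope ring_scope.

(* A window around n + 1 either contains n, and is then a window around n, or
   starts at n + 1; in the latter case adding the point n moves the average by
   at most L/2 when |f'| <= L, because the i-th point of the window differs
   from |f n| by at most (i + 1) L and 1 + ... + m = m (m + 1) / 2.  Hence
   Mt f (n + 1) <= Mt f n + L/2, and the mirror image k |-> -k gives the other
   inequality.  The same comparison with the factor 2 in place of the additive
   L/2 shows that Mt f is finite everywhere as soon as it is finite somewhere.
   For c 1_{a}, Mt = |c| at a and <= |c|/2 at a + 1. *)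

Section MaximalFunction.
Context {R : realType}.
Implicit Types (f : int -> R) (n a : int) (r s : nat) (c L : R).

Lemma double_triangular_sum N : (\sum_(i < N) i.+1%:R) * 2 = (N * N.+1)%:R :> R.
Proof.
elim: N => [|N IH]; first by rewrite big_ord0 mul0r.
by rewrite big_ord_recr /= mulrDl IH -natrM -natrD; congr (_%:R); lia.
Qed.

Lemma mean_le_mean_cons N (a : 'I_N.+1 -> R) (x L : R) :
  (forall i : 'I_N.+1, a i - x <= i.+1%:R * L) ->
  (\sum_i a i) / N.+1%:R <= (x + \sum_i a i) / N.+2%:R + L / 2.
Proof.
move=> ax_le; set S := \sum_i a i.
have gap_le : S - N.+1%:R * x <= L * (N.+1 * N.+2)%:R / 2.
  have : \sum_i (a i - x) <= \sum_(i < N.+1) i.+1%:R * L.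
    by apply: ler_sum => i _; exact: ax_le.
  rewrite sumrB sumr_const card_ord -mulr_suml -double_triangular_sum mulr_natl.
  by rewrite mulrC mulrA mulfK // pnatr_eq0.
have -> : S / N.+1%:R = (x + S) / N.+2%:R + (S - N.+1%:R * x) / (N.+1 * N.+2)%:R.
  by rewrite natrM -!natr1; field; rewrite !natr1 !pnatr_eq0.
by rewrite lerD2l ler_pdivrMr ?ltr0n ?muln_gt0 // mulrAC.
Qed.

Lemma mean_le_double_mean_cons N (S x : R) : 0 <= S -> 0 <= x ->
  S / N.+1%:R <= 2 * ((x + S) / N.+2%:R).
Proof.
move=> S0 x0; rewrite mulrA ler_pdivrMr ?ltr0n // mulrAC ler_pdivlMr ?ltr0n //.
have hN : 0 <= (N%:R : R) by rewrite ler0n.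
rewrite -!natr1; nra.
Qed.

Lemma dist_shift_le f L : (forall k, `|dder f k| <= L) ->
  forall k (j : nat), `|f (k + j%:Z) - f k| <= j%:R * L.
Proof.
move=> dder_le k; elim=> [|j IH]; first by rewrite addr0 subrr normr0 mul0r.
have -> : f (k + j.+1%:Z) - f k = dder f (k + j%:Z) + (f (k + j%:Z) - f k).
  by rewrite /dder (_ : k + j.+1%:Z = k + j%:Z + 1); [ring | lia].
by rewrite -natr1 mulrDl mul1r addrC (le_trans (ler_normD _ _)) ?lerD.
Qed.

Lemma avg_ge0 f n r s : 0 <= avg f n r s.
Proof. by rewrite /avg divr_ge0 // sumr_ge0. Qed.

Lemma avg_le_Mt f n r s : ((avg f n r s)%:E <= Mt f n)%E.
Proof. by apply: ereal_sup_ubound; exists (r, s). Qed.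

Lemma Mt_ge0 f n : (0 <= Mt f n)%E.
Proof. by apply: le_trans (avg_le_Mt f n 0 0); rewrite lee_fin avg_ge0. Qed.

Lemma avg_shift f n r s : avg f n r.+1 s = avg f (n + 1) r s.+1.
Proof.
rewrite /avg addSnnS; congr (_ / _).
by apply: eq_bigr => i _; congr `|f _|; lia.
Qed.

Lemma avg_reflect f n r s : avg (fun k => f (- k)) n r s = avg f (- n) s r.
Proof.
rewrite /avg [(s + r)%N]addnC; congr (_ / _).
rewrite (reindex_inj rev_ord_inj); apply: eq_bigr => i _ /=.
by congr `|f _|; have := ltn_ord i; lia.
Qed.

Lemma Mt_reflect f n : Mt (fun k => f (- k)) n = Mt f (- n).
Proof.
rewrite /Mt; congr ereal_sup; apply/seteqP; split=> _ [[r s] _ <-];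
  by exists (s, r); rewrite ?avg_reflect.
Qed.

Lemma avg_from f n r : avg f n r 0 = (\sum_(i < r.+1) `|f (n + i%:Z)|) / r.+1%:R.
Proof. by rewrite /avg addn0 addn1 subr0. Qed.

Lemma avg_from_cons f n r :
  avg f n r.+1 0 = (`|f n| + \sum_(i < r.+1) `|f (n + 1 + i%:Z)|) / r.+2%:R.
Proof.
rewrite avg_from big_ord_recl addr0; congr ((_ + _) / _).
by apply: eq_bigr => i _; congr `|f _|; rewrite lift0; lia.
Qed.

Lemma avg_le_avg_cons f L : (forall k, `|dder f k| <= L) ->
  forall n r, avg f (n + 1) r 0 <= avg f n r.+1 0 + L / 2.
Proof.
move=> dder_le n r; rewrite avg_from avg_from_cons; apply: mean_le_mean_cons => i.
apply: le_trans (lerB_dist _ _) _.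
by rewrite (_ : n + 1 + i%:Z = n + i.+1%:Z); [exact: dist_shift_le | lia].
Qed.

Lemma avg_le_double_avg_cons f n r : avg f (n + 1) r 0 <= 2 * avg f n r.+1 0.
Proof.
by rewrite avg_from avg_from_cons mean_le_double_mean_cons ?sumr_ge0.
Qed.

Lemma Mt_succ_le f n (B : \bar R) : (Mt f n <= B)%E ->
  (forall r, ((avg f (n + 1) r 0)%:E <= B)%E) -> (Mt f (n + 1) <= B)%E.
Proof.
move=> MtB avgB; apply: ge_ereal_sup => _ [[r [|s]] _ <-] //=.
by rewrite -avg_shift (le_trans (avg_le_Mt _ _ _ _)).
Qed.

Lemma Mt_succ_le_add f L : (forall k, `|dder f k| <= L) ->
  forall n, (Mt f (n + 1) <= Mt f n + (L / 2)%:E)%E.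
Proof.
move=> dder_le n; have L_ge0 : 0 <= L := le_trans (normr_ge0 _) (dder_le 0).
apply: Mt_succ_le => [|r]; first by rewrite lee_paddr // lee_fin divr_ge0.
rewrite (le_trans _ (leeD2r _ (avg_le_Mt f n r.+1 0))) //.
by rewrite -EFinD lee_fin avg_le_avg_cons.
Qed.

Lemma Mt_succ_le_double f n : (Mt f (n + 1) <= 2%:E * Mt f n)%E.
Proof.
apply: Mt_succ_le => [|r]; first by rewrite lee_pemull ?Mt_ge0 ?lee_fin ?ler1n.
by rewrite (le_trans _ (lee_wpmul2l _ (avg_le_Mt f n r.+1 0))) ?lee_fin
  ?avg_le_double_avg_cons.
Qed.

Lemma dder_reflect f k : `|dder (fun k => f (- k)) k| = `|dder f (- k - 1)|.
Proof. by rewrite /dder subrK opprD distrC. Qed.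

Lemma Mt_le_succ_add f L : (forall k, `|dder f k| <= L) ->
  forall n, (Mt f n <= Mt f (n + 1) + (L / 2)%:E)%E.
Proof.
move=> dder_le n.
have dder_reflect_le k : `|dder (fun k => f (- k)) k| <= L by rewrite dder_reflect.
have := Mt_succ_le_add _ _ dder_reflect_le (- n - 1).
by rewrite subrK !Mt_reflect opprD !opprK.
Qed.

Lemma Mt_le_succ_double f n : (Mt f n <= 2%:E * Mt f (n + 1))%E.
Proof.
by have := Mt_succ_le_double (fun k => f (- k)) (- n - 1);
  rewrite subrK !Mt_reflect opprD !opprK.
Qed.

Lemma Mt_fin_num_succ f n : (Mt f (n + 1) \is a fin_num) = (Mt f n \is a fin_num).
Proof.
rewrite !ge0_fin_numE ?Mt_ge0 //; apply/idP/idP => Mt_lt.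
- by apply: le_lt_trans (Mt_le_succ_double f n) _; rewrite lte_mul_pinfty ?lee_fin.
- by apply: le_lt_trans (Mt_succ_le_double f n) _; rewrite lte_mul_pinfty ?lee_fin.
Qed.

Lemma succ_invariant_const (P : int -> bool) :
  (forall n, P (n + 1) = P n) -> forall m n, P m = P n.
Proof.
move=> PS; have P_addn m (k : nat) : P (m + k%:Z) = P m.
  elim: k => [|k IH]; first by rewrite addr0.
  by rewrite -IH -(PS (m + k%:Z)); congr P; lia.
move=> m n; wlog le_mn : m n / m <= n => [hwlog|].
  by case: (lerP m n) => [/hwlog // | /ltW /hwlog ->].
by rewrite -(P_addn m `|n - m|%N); congr P; lia.
Qed.

Lemma Mt_fin_num f : (exists n, Mt f n != +oo%E) -> forall n, Mt f n \is a fin_num.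
Proof.
move=> [m Mtm_fin] n.
have Mt_fin_num_eq := succ_invariant_const (fun k => Mt f k \is a fin_num).
rewrite (Mt_fin_num_eq (Mt_fin_num_succ f) n m).
by rewrite ge0_fin_numE ?Mt_ge0 // ltey.
Qed.

Lemma supnorm_ge (g : int -> R) n : (`|g n|%:E <= supnorm g)%E.
Proof. by apply: ereal_sup_ubound; exists n. Qed.

Lemma supnorm_le (g : int -> R) B : (forall n, `|g n| <= B) -> (supnorm g <= B%:E)%E.
Proof. by move=> gB; apply: ge_ereal_sup => _ [n _ <-]; rewrite lee_fin. Qed.

Lemma supnorm_ge0 (g : int -> R) : (0 <= supnorm g)%E.
Proof. exact: le_trans (supnorm_ge g 0). Qed.

Lemma supnorm_dder_Mtr_le f : (forall n, Mt f n \is a fin_num) ->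
  (supnorm (dder (Mtr f)) <= (2^-1)%:E * supnorm (dder f))%E.
Proof.
move=> Mt_fin.
case E: (supnorm (dder f)) (supnorm_ge0 (dder f)) => [L| |] // _; last first.
  by rewrite gt0_muley ?leey // lte_fin invr_gt0.
have dder_le k : `|dder f k| <= L by rewrite -lee_fin -E supnorm_ge.
rewrite -EFinM; apply: supnorm_le => n.
have := Mt_succ_le_add _ _ dder_le n; have := Mt_le_succ_add _ _ dder_le n.
rewrite /dder /Mtr -(fineK (Mt_fin n)) -(fineK (Mt_fin (n + 1))) -!EFinD !lee_fin /=.
by rewrite ler_norml => *; apply/andP; split; lra.
Qed.

Lemma avg_le_sup f B n r s : (forall k, `|f k| <= B) -> avg f n r s <= B.
Proof.
move=> fB; rewrite /avg ler_pdivrMr ?ltr0n ?addn1 //.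
by rewrite (le_trans (ler_sum _ (fun i _ => fB _))) // sumr_const card_ord mulr_natr.
Qed.

Lemma delta_norm_le a c k : `|delta a c k| <= `|c|.
Proof. by rewrite /delta; case: eqP; rewrite ?normr0. Qed.

Lemma dder_delta_le a c k : `|dder (delta a c) k| <= `|c|.
Proof.
rewrite /dder /delta; case: eqP => h1; case: eqP => h2; first lia.
- by rewrite subr0.
- by rewrite sub0r normrN.
- by rewrite subr0 normr0.
Qed.

Lemma Mt_delta a c : Mt (delta a c) a = `|c|%:E.
Proof.
apply/le_anti/andP; split.
  apply: ge_ereal_sup => _ [[r s] _ <-].
  by rewrite lee_fin avg_le_sup // => k; apply: delta_norm_le.
apply: le_trans (avg_le_Mt _ a 0 0).
by rewrite /avg big_ord1 /delta subr0 addr0 eqxx divr1.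
Qed.

Lemma sum_delta_le a c m N : \sum_(i < N) `|delta a c (m + i%:Z)| <= `|c|.
Proof.
have [i0 /eqP hit | miss] := pickP (fun i : 'I_N => m + i%:Z == a); last first.
  by rewrite big1 // => i _; rewrite /delta miss normr0.
rewrite (bigD1 i0) //= big1 ?addr0 ?delta_norm_le // => i ne_i.
rewrite /delta ifN ?normr0 //; apply: contra ne_i => /eqP hi.
by apply/eqP/val_inj => /=; lia.
Qed.

(* Every window around [a + 1] either misses [a] or has at least two points. *)
Lemma Mt_delta_succ_le a c : (Mt (delta a c) (a + 1) <= (`|c| / 2)%:E)%E.
Proof.
apply: ge_ereal_sup => _ [[r s] _ <-]; rewrite lee_fin /=.
case: (posnP (r + s)) => [rs0 | rs_gt0].
  have [-> ->] : r = 0%N /\ s = 0%N by lia.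
  by rewrite /avg big_ord1 /delta ifN ?normr0 ?mul0r ?divr_ge0 //; apply/eqP; lia.
rewrite /avg ler_pdivrMr ?ltr0n ?addn1 // (le_trans (sum_delta_le _ _ _ _)) //.
rewrite mulrAC ler_pdivlMr ?ler_wpM2l ?ler_nat //; lia.
Qed.

Lemma dder_Mtr_delta_ge a c : 2^-1 * `|c| <= `|dder (Mtr (delta a c)) a|.
Proof.
have Mt_fin : Mt (delta a c) (a + 1) \is a fin_num.
  by rewrite Mt_fin_num_succ Mt_delta.
have := Mt_ge0 (delta a c) (a + 1); have := Mt_delta_succ_le a c.
rewrite /dder /Mtr Mt_delta -(fineK Mt_fin) !lee_fin /=.
by move=> *; rewrite ler_normr; apply/orP; right; lra.
Qed.

End MaximalFunction.

Theorem theorem5p4 (R : realType) :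
  (forall f : int -> R, (exists n, Mt f n != +oo%E) ->
     (forall n, Mt f n \is a fin_num) /\
     (supnorm (dder (Mtr f)) <= (2^-1)%:E * supnorm (dder f))%E) /\
  (forall (a : int) (c : R), c != 0 ->
     (forall n, Mt (delta a c) n \is a fin_num) /\
     supnorm (dder (Mtr (delta a c))) = ((2^-1)%:E * supnorm (dder (delta a c)))%E).
Proof.
split=> [f Mt_fin | a c _].
  by split; [exact: Mt_fin_num | apply/supnorm_dder_Mtr_le/Mt_fin_num].
have Mt_fin : forall n, Mt (delta a c) n \is a fin_num.
  by apply: Mt_fin_num; exists a; rewrite Mt_delta.
split=> //; apply/le_anti; rewrite supnorm_dder_Mtr_le //=.
apply: le_trans (supnorm_ge _ a).
apply: (@le_trans _ _ (2^-1 * `|c|)%:E); last by rewrite lee_fin dder_Mtr_delta_ge.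
rewrite EFinM lee_wpmul2l ?lee_fin ?invr_ge0 //.
exact: supnorm_le (dder_delta_le a c).
Qed.
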